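(* Let $d\ge0$ and $n>d$ be integers and let $T\in L(n,d)$ with $T\neq\emptyset$. Then $$\mu_{n,d}(T)=\prod_{T_i\in T}\mu_{n-|T_i|,\,d-|T_i|}(\{\emptyset\}).$$
   Context: For a finite set $X$ let $\operatorname{codim}_d(X)=d+1-|X|$. For a finite collection $\{T_1,\dots,T_l\}$ of pairwise distinct finite sets put $\rho_d(\{T_1,\dots,T_l\})=\sum_{i=1}^l\operatorname{codim}_d(T_i)$ (with $\rho_d(\emptyset)=0$) and $D_d(\{T_1,\dots,T_l\})=\operatorname{codim}_d(T_1\cap\cdots\cap T_l)-\rho_d(\{T_1,\dots,T_l\})$. For integers $d\ge0$, $n>d$, $L(n,d)$ is the set of all collections $T$ of subsets of $\{1,\dots,n\}$ such that (i) $D_d(T')>0$ for every $T'\subset T$ with $|T'|>1$, and (ii) $0\le|T_i|\le d$ for every $T_i\in T$ (so $L(n,0)=\{\emptyset,\{\emptyset\}\}$; $\emptyset$ is the minimum and $\{\emptyset\}$ the maximum of $L(n,d)$). It is partially ordered by: $T<T'$ iff $\rho_d(T)<\rho_d(T')$ and for every $T_i\in T$ there exists $T'_j\in T'$ with $T'_j\subset T_i$; $T\le T'$ means $T<T'$ or $T=T'$. The Möbius function $\mu_{n,d}$ of $L(n,d)$ is defined by $\mu_{n,d}(T,T)=1$ and $\sum_{S:\,T\le S\le T'}\mu_{n,d}(T,S)=0$ for $T<T'$; and $\mu_{n,d}(T):=\mu_{n,d}(\emptyset,T)$. *)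

From mathcomp Require Import all_boot all_order all_algebra.
Set Implicit Arguments. Unset Strict Implicit. Unset Printing Implicit Defensive.
Import GRing.Theory Num.Theory.
Local Open Scope ring_scope.

(* Subsets of {1,...,n} are modelled as subsets of 'I_n; collections of such
   subsets as {set {set 'I_n}} (collections of pairwise distinct sets). *)

Definition codim (n d : nat) (X : {set 'I_n}) : int := (d.+1)%:Z - (#|X|)%:Z.

Definition rho (n d : nat) (T : {set {set 'I_n}}) : int :=
  \sum_(X in T) codim d X.

Definition Dd (n d : nat) (T : {set {set 'I_n}}) : int :=
  codim d (\bigcap_(X in T) X) - rho d T.

Definition inL (n d : nat) (T : {set {set 'I_n}}) : bool :=
  [forall T' : {set {set 'I_n}},
     ((T' \subset T) && (1 < #|T'|)%N) ==> (0 < Dd d T')]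
  && [forall X in T, (#|X| <= d)%N].

Definition ltL (n d : nat) (T T' : {set {set 'I_n}}) : bool :=
  (rho d T < rho d T') &&
  [forall X in T, [exists Y in T', Y \subset X]].

Definition leL (n d : nat) (T T' : {set {set 'I_n}}) : bool :=
  ltL d T T' || (T == T').

Fixpoint mobius_aux (n d : nat) (k : nat) (T T' : {set {set 'I_n}}) : int :=
  if T == T' then 1
  else if ltL d T T' then
    match k with
    | 0 => 0
    | k'.+1 => - \sum_(S : {set {set 'I_n}} | inL d S && leL d T S && ltL d S T')
                   mobius_aux d k' T S
    end
  else 0.

(* fuel: the number of collections, which bounds the length of any chain *)
Definition mobius (n d : nat) (T T' : {set {set 'I_n}}) : int :=
  mobius_aux d #|{: {set {set 'I_n}}}| T T'.

Definition mu (n d : nat) (T : {set {set 'I_n}}) : int := mobius d set0 T.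

(* On L(n,d), T < T' just says that T properly refines T': by the defining
   inequality D_d > 0, rho strictly drops under proper refinement.  Hence mu is
   the unique function with mu(emptyset) = 1 whose sum over the refinements of
   any nonempty U vanishes.  For X in T, a refinement S of T splits uniquely into
   its members above X, a refinement of {X}, and the others, a refinement of
   T minus X; conversely any such pair glues back to a member of L(n,d).  So the
   interval below T is the product of the intervals below {X} and below T minus X,
   and mu(T) is the product of the mu({X}).  Finally U |-> X :|: U identifies
   L(n - |X|, d - |X|), on the complement of X, with the refinements of {X},
   which gives mu({X}) = mu_{n-|X|, d-|X|}({emptyset}). *)

From mathcomp Require Import all_boot all_order all_algebra.
From mathcomp Require Import ring.
Set Implicit Arguments. Unset Strict Implicit. Unset Printing Implicit Defensive.
Import Order.TTheory GRing.Theory Num.Theory.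
Local Open Scope ring_scope.

Section Collections.
Variables (n d : nat).
Local Notation fam := {set {set 'I_n}}.
Implicit Types (S U G : fam) (X Y Z : {set 'I_n}).

Definition refine S U := [forall Y in S, [exists Z in U, Z \subset Y]].

Lemma refineP S U :
  reflect (forall Y, Y \in S -> exists2 Z, Z \in U & Z \subset Y) (refine S U).
Proof.
apply: (iffP forall_inP) => H Y /H; first by case/exists_inP => Z; exists Z.
by case=> Z ZU ZY; apply/exists_inP; exists Z.
Qed.

Lemma refine_refl S : refine S S.
Proof. by apply/refineP => Y YS; exists Y. Qed.

Lemma refine_trans S U G : refine S U -> refine U G -> refine S G.
Proof.
move=> /refineP SU /refineP UG; apply/refineP => Y /SU[Z /UG[W WG WZ] ZY].
by exists W => //; apply: subset_trans ZY.
Qed.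

Lemma refine_subset S' S U : S' \subset S -> refine S U -> refine S' U.
Proof. by move=> sub /refineP SU; apply/refineP => Y /(subsetP sub) /SU. Qed.

Lemma refine_subsetr S U : S \subset U -> refine S U.
Proof. by move=> sub; apply/refineP => Y YS; exists Y; rewrite ?(subsetP sub). Qed.

Lemma refine_setU S S' U : refine S U -> refine S' U -> refine (S :|: S') U.
Proof.
move=> /refineP SU /refineP S'U; apply/refineP => Y.
by rewrite inE => /orP[/SU | /S'U].
Qed.

Lemma refine_set1P S Z : reflect (forall Y, Y \in S -> Z \subset Y) (refine S [set Z]).
Proof.
apply: (iffP (refineP _ _)) => [SZ Y /SZ[W] | SZ Y /SZ]; last by exists Z; rewrite ?set11.
by rewrite inE => /eqP ->.
Qed.

Lemma inL_card S Y : inL d S -> Y \in S -> (#|Y| <= d)%N.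
Proof. by case/andP=> _ /forall_inP; apply. Qed.

Lemma inL_Dd S S' : inL d S -> S' \subset S -> (1 < #|S'|)%N -> 0 < Dd d S'.
Proof. by case/andP=> /forallP H _ sub c; move: (H S'); rewrite sub c. Qed.

Lemma inLP S :
  (forall S', S' \subset S -> (1 < #|S'|)%N -> 0 < Dd d S') ->
  (forall Y, Y \in S -> (#|Y| <= d)%N) -> inL d S.
Proof.
move=> hD hcard; apply/andP; split; last exact/forall_inP.
by apply/forallP => S'; apply/implyP => /andP[]; apply: hD.
Qed.

Lemma inL_subset S S' : inL d S -> S' \subset S -> inL d S'.
Proof.
move=> LS sub; apply: inLP => [S'' sub' | Y /(subsetP sub)]; last exact: inL_card.
by apply: inL_Dd LS _; apply: subset_trans sub.
Qed.

Lemma codim_gt0 X : (#|X| <= d)%N -> 0 < codim d X.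
Proof. by move=> hX; rewrite subr_gt0 ltz_nat ltnS. Qed.

Lemma rho_ge0 S : inL d S -> 0 <= rho d S.
Proof. by move=> LS; apply: sumr_ge0 => Y /(inL_card LS) /codim_gt0 /ltW. Qed.

Lemma rho_gt0 S : inL d S -> S != set0 -> 0 < rho d S.
Proof.
move=> LS /set0Pn[Y YS]; rewrite /rho (bigD1 Y) //=.
rewrite ltr_wpDr ?codim_gt0 ?(inL_card LS) //.
by apply: sumr_ge0 => Z /andP[/(inL_card LS) /codim_gt0 /ltW].
Qed.

Lemma rho_set1 X : rho d [set X] = codim d X.
Proof. by rewrite /rho big_set1. Qed.

(* [D_d] of the pair says [d + 1 + |Z1 :&: Z2| < |Z1| + |Z2| = |Z1 :|: Z2| + |Z1 :&: Z2|]. *)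
Lemma inL_below_uniq S Z1 Z2 Y : inL d S -> Z1 \in S -> Z2 \in S ->
  Z1 \subset Y -> Z2 \subset Y -> (#|Y| <= d)%N -> Z1 = Z2.
Proof.
move=> LS Z1S Z2S Z1Y Z2Y hY; apply/eqP; apply: contraTT hY => neq.
have sub : [set Z1; Z2] \subset S by rewrite subUset !sub1set Z1S.
have := inL_Dd LS sub; rewrite cards2 neq => /(_ isT).
rewrite /Dd /rho big_setU1 ?inE //= big_set1 big_setU1 ?inE //= big_set1.
have -> : forall a b c e : int, e - a - (e - b + (e - c)) = b + c - (e + a).
  by move=> *; ring.
rewrite subr_gt0 -!PoszD ltz_nat -ltnNge => hD.
have hU : (#|Z1 :|: Z2| <= #|Y|)%N by rewrite subset_leq_card // subUset Z1Y.
rewrite -cardsUI ltn_add2r in hD.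
exact: leq_trans (ltnW hD) hU.
Qed.

Definition supsets Z : fam := [set Y : {set 'I_n} | Z \subset Y].

Definition fiber S Z := S :&: supsets Z.

Lemma fiber_subset S Z : fiber S Z \subset S.
Proof. exact: subsetIl. Qed.

Lemma refine_fiber_set1 S Z : refine (fiber S Z) [set Z].
Proof. by apply/refine_set1P => Y; rewrite !inE => /andP[]. Qed.

Lemma inL_fiber S Z : inL d S -> inL d (fiber S Z).
Proof. by move=> LS; apply: inL_subset LS (fiber_subset S Z). Qed.

(* Each [Y] in [S] lies above exactly one member of [U], by [inL_below_uniq]. *)
Lemma big_fiber (R : Type) (idx : R) (op : Monoid.com_law idx) U S
    (F : {set 'I_n} -> R) :
  inL d U -> (forall Y, Y \in S -> (#|Y| <= d)%N) -> refine S U ->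
  \big[op/idx]_(Y in S) F Y = \big[op/idx]_(Z in U) \big[op/idx]_(Y in fiber S Z) F Y.
Proof.
move=> LU hS /refineP SU.
pose below Y := odflt set0 [pick Z in U | Z \subset Y].
have belowE Y Z : Y \in S -> Z \in U -> (below Y == Z) = (Z \subset Y).
  move=> YS ZU; rewrite /below; case: pickP => [W /andP[WU WY] | none] /=.
    apply/eqP/idP => [<- // | ZY].
    exact: inL_below_uniq LU WU ZU WY ZY (hS Y YS).
  by have [W WU WY] := SU Y YS; have := none W; rewrite WU WY.
rewrite (partition_big below (mem U)) => [|Y YS]; last first.
  have [Z ZU ZY] := SU Y YS.
  by have /eqP-> : below Y == Z by rewrite belowE.
apply: eq_bigr => Z ZU; apply: eq_bigl => Y; rewrite !inE.
by case YS: (Y \in S); rewrite //= belowE.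
Qed.

Lemma codim_leif X Y : X \subset Y -> codim d Y <= codim d X ?= iff (Y == X).
Proof.
move=> XY; rewrite eq_sym eqEcard XY /= /codim; split.
  by rewrite lerD2l lerN2 lez_nat subset_leq_card.
by rewrite (inj_eq (addrI _)) (inj_eq oppr_inj) eqz_nat eqn_leq (subset_leq_card XY) andbT.
Qed.

Lemma rho_le_codim_bigcap G : inL d G -> G != set0 ->
  rho d G <= codim d (\bigcap_(Y in G) Y).
Proof.
move=> LG G0; case: (ltnP 1 #|G|) => [G2 | G1].
  by have := inL_Dd LG (subxx G) G2; rewrite subr_gt0 => /ltW.
have /cards1P[Y ->] : #|G| == 1%N by rewrite eqn_leq G1 card_gt0.
by rewrite rho_set1 big_set1.
Qed.

Lemma rho_above_leif G Z : inL d G -> (forall Y, Y \in G -> Z \subset Y) ->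
  (#|Z| <= d)%N -> rho d G <= codim d Z ?= iff (G == [set Z]).
Proof.
move=> LG above hZ; case: (eqVneq G set0) => [-> | G0].
  rewrite /rho big_set0 eq_sym -subset0 sub1set inE.
  by apply/leifP; apply: codim_gt0.
case: (ltnP 1 #|G|) => [G2 | G1]; last first.
  have /cards1P[Y GY] : #|G| == 1%N by rewrite eqn_leq G1 card_gt0.
  rewrite GY rho_set1 (inj_eq set1_inj).
  by apply: codim_leif; apply: above; rewrite GY set11.
have ZG : Z \subset \bigcap_(Y in G) Y by apply/bigcapsP.
have lt_codim : rho d G < codim d Z.
  apply: lt_le_trans (codim_leif ZG).
  by have := inL_Dd LG (subxx G) G2; rewrite subr_gt0.
split; first exact: ltW.
by rewrite lt_eqF //; apply/esym/negbTE; apply: contraTneq G2 => ->; rewrite cards1.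
Qed.

Lemma fiber_self U Z : inL d U -> Z \in U -> fiber U Z = [set Z].
Proof.
move=> LU ZU; apply/setP => Y; rewrite !inE.
apply/idP/eqP => [/andP[YU ZY] | ->]; last by rewrite ZU subxx.
by apply/esym/(inL_below_uniq LU ZU YU ZY) => //; apply: inL_card LU YU.
Qed.

Lemma refine_eq_fibers S U : inL d U -> refine S U ->
  (S == U) = [forall (Z | Z \in U), fiber S Z == [set Z]].
Proof.
move=> LU /refineP SU; apply/eqP/forall_inP => [-> Z ZU | fibers].
  by rewrite fiber_self.
apply/setP => Y; apply/idP/idP => [YS | YU].
  have [Z ZU ZY] := SU Y YS.
  have : Y \in fiber S Z by rewrite !inE YS.
  by rewrite (eqP (fibers Z ZU)) inE => /eqP ->.
by have := set11 Y; rewrite -(eqP (fibers Y YU)) !inE => /andP[].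
Qed.

Lemma rho_refine_leif S U : inL d S -> inL d U -> refine S U ->
  rho d S <= rho d U ?= iff (S == U).
Proof.
move=> LS LU SU; rewrite refine_eq_fibers // {1}/rho (big_fiber _ _ LU _ SU).
  apply: leif_sum => Z ZU; apply: rho_above_leif (inL_fiber Z LS) _ (inL_card LU ZU).
  by move=> Y; rewrite !inE => /andP[].
by move=> Y; apply: inL_card LS.
Qed.

Lemma ltL_refine S U : inL d S -> inL d U -> ltL d S U = refine S U && (S != U).
Proof.
move=> LS LU; rewrite /ltL -/(refine S U) andbC; case SU: (refine S U) => //=.
exact: lt_leif (rho_refine_leif LS LU SU).
Qed.

Lemma card_bigcup_le (I : finType) (P : pred I) (F : I -> {set 'I_n}) :
  (#|\bigcup_(i | P i) F i| <= \sum_(i | P i) #|F i|)%N.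
Proof.
elim/big_rec2: _ => [|i k A _ IH]; first by rewrite cards0.
by apply: leq_trans (leq_card_setU (F i) A).1 _; rewrite leq_add2l.
Qed.

Lemma card_bigcap_le (I : finType) (P : pred I) (B Z : I -> {set 'I_n}) :
  (#|\bigcap_(i | P i) B i| <= #|\bigcap_(i | P i) Z i| + \sum_(i | P i) #|B i :\: Z i|)%N.
Proof.
have sub : \bigcap_(i | P i) B i \subset
           \bigcap_(i | P i) Z i :|: \bigcup_(i | P i) (B i :\: Z i).
  apply/subsetP => x /bigcapP xB; rewrite inE; apply/orP.
  case: (boolP [forall (i | P i), x \in Z i]) => [/forall_inP xZ | /forall_inPn[i Pi xZi]].
    by left; apply/bigcapP.
  by right; apply/bigcupP; exists i; rewrite // inE xZi xB.
apply: leq_trans (subset_leq_card sub) _; apply: leq_trans (leq_card_setU _ _).1 _.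
by rewrite leq_add2l card_bigcup_le.
Qed.

Lemma codim_bigcap_ge (I : finType) (P : pred I) (B Z : I -> {set 'I_n}) :
  (forall i, P i -> Z i \subset B i) ->
  codim d (\bigcap_(i | P i) Z i) - \sum_(i | P i) (codim d (Z i) - codim d (B i))
    <= codim d (\bigcap_(i | P i) B i).
Proof.
move=> ZB; have := card_bigcap_le P B Z.
rewrite -lez_nat PoszD (big_morph Posz PoszD (erefl 0%:Z)) => hcard.
rewrite (eq_bigr (fun i => (#|B i :\: Z i|)%:Z)) => [|i Pi].
  by rewrite /codim -addrA -opprD lerD2l lerN2.
by rewrite cardsDS ?ZB // -subzn ?subset_leq_card ?ZB // /codim; ring.
Qed.

Lemma Dd_le_refine U S : inL d U -> refine S U -> (forall Y, Y \in S -> (#|Y| <= d)%N) ->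
  (forall Z, Z \in U -> inL d (fiber S Z) /\ fiber S Z != set0) -> Dd d U <= Dd d S.
Proof.
move=> LU SU hS hfib; pose B Z := \bigcap_(Y in fiber S Z) Y.
have capS : \bigcap_(Y in S) Y = \bigcap_(Z in U) B Z := big_fiber _ _ LU hS SU.
have rhoS : rho d S = \sum_(Z in U) rho d (fiber S Z) := big_fiber _ _ LU hS SU.
have ZB Z : Z \in U -> Z \subset B Z.
  by move=> _; apply/bigcapsP => Y; rewrite !inE => /andP[].
have rhoB Z : Z \in U -> rho d (fiber S Z) <= codim d (B Z).
  by case/hfib; apply: rho_le_codim_bigcap.
rewrite /Dd capS rhoS.
have -> : codim d (\bigcap_(Z in U) Z) - rho d U =
    codim d (\bigcap_(Z in U) Z) - \sum_(Z in U) (codim d Z - codim d (B Z))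
    - \sum_(Z in U) codim d (B Z).
  by rewrite sumrB /rho; ring.
exact: lerB (codim_bigcap_ge ZB) (ler_sum _ rhoB).
Qed.

Lemma inL_glue U S : inL d U -> refine S U -> (forall Y, Y \in S -> (#|Y| <= d)%N) ->
  (forall Z, Z \in U -> inL d (fiber S Z)) -> inL d S.
Proof.
move=> LU SU hS LSZ; apply: inLP => // S' S'S S'2.
pose I := [set Z in U | fiber S' Z != set0].
have IU : I \subset U by apply/subsetP => Z; rewrite inE => /andP[].
have S'I : refine S' I.
  apply/refineP => Y YS'; have [Z ZU ZY] := refineP _ _ (refine_subset S'S SU) Y YS'.
  by exists Z => //; rewrite inE ZU; apply/set0Pn; exists Y; rewrite !inE YS'.
have fibS' Z : fiber S' Z \subset fiber S Z.
  by apply/subsetP => Y; rewrite !inE => /andP[/(subsetP S'S) -> ->].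
case: (ltnP 1 #|I|) => [I2 | I1].
  apply: lt_le_trans (inL_Dd LU IU I2) _.
  apply: Dd_le_refine (inL_subset LU IU) S'I _ _ => [Y /(subsetP S'S) /hS // | Z ZI].
  move: (ZI); rewrite inE => /andP[ZU ->]; split=> //.
  exact: inL_subset (LSZ Z ZU) (fibS' Z).
have [Y YS'] : exists Y, Y \in S' by apply/set0Pn; rewrite -card_gt0 ltnW.
have /cards1P[Z IZ] : #|I| == 1%N.
  rewrite eqn_leq I1 card_gt0; have [Z ZI _] := refineP _ _ S'I Y YS'.
  by apply/set0Pn; exists Z.
have S'Z : S' \subset fiber S Z.
  apply/subsetP => W WS'; have [Z' Z'I Z'W] := refineP _ _ S'I W WS'.
  by move: Z'I; rewrite IZ inE => /eqP eZ; rewrite !inE (subsetP S'S) // -eZ.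
have ZU : Z \in U by rewrite (subsetP IU) // IZ set11.
exact: inL_Dd (LSZ Z ZU) S'Z S'2.
Qed.

End Collections.

Section Mobius.
Variables (n d : nat).
Hypothesis dn : (d < n)%N.
Local Notation fam := {set {set 'I_n}}.
Implicit Types (S T U : fam).

Lemma inL_top : inL d [set set0 : {set 'I_n}].
Proof.
apply: inLP => [S' sub | Y]; last by rewrite inE => /eqP ->; rewrite cards0.
by rewrite ltnNge (leq_trans (subset_leq_card sub)) ?cards1.
Qed.

Lemma rho_le_top S : inL d S -> rho d S <= (d.+1)%:Z.
Proof.
move=> LS; have top_rho : rho d [set set0 : {set 'I_n}] = (d.+1)%:Z.
  by rewrite rho_set1 /codim cards0 subr0.
rewrite -top_rho; apply: rho_refine_leif LS inL_top _.
by apply/refineP => Y _; exists set0; rewrite ?set11 ?sub0set.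
Qed.

Lemma card_fam_ge : (n <= #|{: fam}|)%N.
Proof.
have inj : injective (fun i : 'I_n => [set [set i]]) by move=> i j /set1_inj/set1_inj.
by have := @leq_card _ _ _ inj; rewrite card_ord.
Qed.

Lemma ltL_set0 S : inL d S -> S != set0 -> ltL d set0 S.
Proof.
move=> LS S0; rewrite /ltL {1}/rho big_set0 rho_gt0 //=.
by apply/forall_inP => Y; rewrite inE.
Qed.

Lemma sum_refine_split (g : fam -> int) S : inL d S ->
  \sum_(S' | inL d S' && refine S' S) g S' = g S + \sum_(S' | inL d S' && ltL d S' S) g S'.
Proof.
move=> LS; rewrite (bigD1 S) /= ?LS ?refine_refl //; congr (_ + _).
by apply: eq_bigl => S'; case LS': (inL d S'); rewrite //= ltL_refine.
Qed.

(* [mobius_aux] does not depend on the fuel once it exceeds [rho]: every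
   recursive call strictly decreases [rho], which is positive off [set0]. *)
Lemma mobius_aux_fuel k1 k2 T : inL d T -> rho d T <= k1%:Z -> rho d T <= k2%:Z ->
  mobius_aux d k1 set0 T = mobius_aux d k2 set0 T.
Proof.
elim: k1 k2 T => [|k1 IH] k2 T LT h1 h2; have [-> | T0] := eqVneq T set0;
  try by case: k2 {h2} => /=; rewrite eqxx.
  by have := lt_le_trans (rho_gt0 LT T0) h1; rewrite ltxx.
case: k2 h2 => [|k2] h2; first by have := lt_le_trans (rho_gt0 LT T0) h2; rewrite ltxx.
rewrite /= eq_sym (negbTE T0) ltL_set0 //; congr (- _).
apply: eq_bigr => S /andP[/andP[LS _] /andP[ST _]].
by apply: IH => //; rewrite -ltzD1 -PoszD addn1 (lt_le_trans ST).
Qed.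

Lemma mu_set0 : mu d (set0 : fam) = 1.
Proof. by rewrite /mu /mobius; case: #|_| => [|k] /=; rewrite eqxx. Qed.

Lemma leL_set0 S : inL d S -> leL d set0 S.
Proof.
move=> LS; apply/orP; have [-> | S0] := eqVneq S set0; [by right | by left; rewrite ltL_set0].
Qed.

Lemma mu_rec T : inL d T -> T != set0 -> mu d T = - \sum_(S | inL d S && ltL d S T) mu d S.
Proof.
move=> LT T0; rewrite /mu /mobius.
have rhoK : rho d T <= (#|{: fam}|)%:Z.
  by apply: le_trans (rho_le_top LT) _; rewrite lez_nat (leq_trans dn card_fam_ge).
case: #|{: fam}| rhoK => [|K] rhoK.
  by have := lt_le_trans (rho_gt0 LT T0) rhoK; rewrite ltxx.
rewrite /= eq_sym (negbTE T0) ltL_set0 //; congr (- _).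
apply: eq_big => [S | S /andP[/andP[LS _] /andP[ST _]]].
  by case LS: (inL d S); rewrite //= leL_set0.
have rhoS := lt_le_trans ST rhoK.
rewrite -[RHS]/(mobius_aux d K.+1 set0 S).
by apply: mobius_aux_fuel; rewrite // ?ltW // -ltzD1 -PoszD addn1.
Qed.

Lemma sum_mu_refine T : inL d T -> T != set0 -> \sum_(S | inL d S && refine S T) mu d S = 0.
Proof. by move=> LT T0; rewrite sum_refine_split // mu_rec // addNr. Qed.

Lemma mu_unique (f : fam -> int) T : inL d T -> f set0 = 1 ->
  (forall U, inL d U -> U != set0 -> refine U T ->
     \sum_(S | inL d S && refine S U) f S = 0) ->
  f T = mu d T.
Proof.
move=> LT f0 hf.
suff IH k S : inL d S -> refine S T -> rho d S < k%:Z -> f S = mu d S.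
  apply: (IH (absz (rho d T)).+1) => //; first exact: refine_refl.
  by rewrite -addn1 PoszD ltzD1 abszE ler_norm.
elim: k S => [|k IHk] S LS ST hk.
  by have := lt_le_trans hk (rho_ge0 LS); rewrite ltxx.
have [-> | S0] := eqVneq S set0; first by rewrite f0 mu_set0.
have := hf S LS S0 ST; have := sum_mu_refine LS S0; rewrite !sum_refine_split //.
have -> : \sum_(S' | inL d S' && ltL d S' S) f S' = \sum_(S' | inL d S' && ltL d S' S) mu d S'.
  apply: eq_bigr => S' /andP[LS' S'S]; apply: IHk => //.
    by apply: refine_trans ST; move: S'S; rewrite ltL_refine // => /andP[].
  by move: hk; rewrite -addn1 PoszD ltzD1; apply: lt_le_trans; case/andP: S'S.
by move=> e_mu e_f; apply: addIr (etrans e_f (esym e_mu)).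
Qed.

End Mobius.

Section Split.
Variables (n d : nat).
Hypothesis dn : (d < n)%N.
Local Notation fam := {set {set 'I_n}}.
Implicit Types (S U A B : fam) (Y Z : {set 'I_n}).
Variables (T : fam) (X : {set 'I_n}).
Hypotheses (LT : inL d T) (XT : X \in T).

Lemma not_above_refine B Y : refine B (T :\ X) -> Y \in B -> (#|Y| <= d)%N -> ~~ (X \subset Y).
Proof.
move=> /refineP BT YB hY; have [Z] := BT Y YB; rewrite !inE => /andP[ZX ZT] ZY.
by apply: contra ZX => XY; rewrite (inL_below_uniq LT ZT XT ZY XY hY).
Qed.

Lemma refine_setD_fiber U : refine U T -> refine (U :\: supsets X) (T :\ X).
Proof.
move=> /refineP UT; apply/refineP => Y; rewrite !inE => /andP[XY YU].
have [Z ZT ZY] := UT Y YU; exists Z => //; rewrite !inE ZT andbT.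
by apply: contraNneq XY => <-.
Qed.

Lemma refine_fiber_sides S U : inL d S -> refine S U -> refine U T ->
  refine (fiber S X) (fiber U X) /\ refine (S :\: supsets X) (U :\: supsets X).
Proof.
move=> LS /refineP SU /refineP UT; split; apply/refineP => Y; rewrite !inE.
  case/andP=> YS XY; have [W WU WY] := SU Y YS; exists W; rewrite // !inE WU /=.
  have [Z ZT ZW] := UT W WU.
  by rewrite -(inL_below_uniq LT ZT XT (subset_trans ZW WY) XY (inL_card LS YS)).
case/andP=> XY YS; have [W WU WY] := SU Y YS; exists W; rewrite // !inE WU andbT.
by apply: contra XY => /subset_trans; apply.
Qed.

Lemma inL_setU_sides A B : inL d A -> inL d B ->
  refine A [set X] -> refine B (T :\ X) -> inL d (A :|: B).
Proof.
move=> LA LB /refine_set1P AX BT.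
have hcard Y : Y \in A :|: B -> (#|Y| <= d)%N.
  by rewrite inE => /orP[]; [apply: inL_card LA | apply: inL_card LB].
apply: (inL_glue LT _ hcard) => [|Z ZT].
  apply/refineP => Y; rewrite inE => /orP[YA | YB]; first by exists X; rewrite ?AX.
  by have [Z] := refineP _ _ BT Y YB; rewrite inE => /andP[_ ZT]; exists Z.
have [-> | ZX] := eqVneq Z X.
  apply: inL_subset LA _; apply/subsetP => Y; rewrite !inE => /andP[/orP[] // YB XY].
  by have := not_above_refine BT YB (inL_card LB YB); rewrite XY.
apply: inL_subset LB _; apply/subsetP => Y; rewrite !inE => /andP[/orP[] // YA ZY].
by have := inL_below_uniq LT ZT XT ZY (AX Y YA) (inL_card LA YA); move/eqP: ZX.
Qed.

Lemma fiber_setU A B : (forall Y, Y \in A -> X \subset Y) ->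
  (forall Y, Y \in B -> ~~ (X \subset Y)) ->
  fiber (A :|: B) X = A /\ (A :|: B) :\: supsets X = B.
Proof.
move=> AX BX; split; apply/setP => Y; rewrite !inE.
  case YA: (Y \in A); first by rewrite AX.
  by case YB: (Y \in B); rewrite //= (negbTE (BX Y YB)).
case YB: (Y \in B); first by rewrite BX ?orbT.
rewrite orbF; case YA: (Y \in A); last by rewrite andbF.
by rewrite (AX Y YA).
Qed.

Lemma fiber_setU_sides U A B : refine U T -> inL d B ->
  refine A (fiber U X) -> refine B (U :\: supsets X) ->
  fiber (A :|: B) X = A /\ (A :|: B) :\: supsets X = B.
Proof.
move=> UT LB AU BU; apply: fiber_setU => [|Y YB].
  exact/refine_set1P/(refine_trans AU (refine_fiber_set1 U X)).
apply: not_above_refine (refine_trans BU (refine_setD_fiber UT)) YB (inL_card LB YB).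
Qed.

Lemma sum_refine_sides (F : fam -> int) U : refine U T ->
  \sum_(S | inL d S && refine S U) F S =
  \sum_(A | inL d A && refine A (fiber U X))
     \sum_(B | inL d B && refine B (U :\: supsets X)) F (A :|: B).
Proof.
move=> UT.
rewrite (partition_big (fun S => fiber S X) (fun A => inL d A && refine A (fiber U X)));
  last first.
  move=> S /andP[LS SU].
  by rewrite (inL_subset LS (fiber_subset _ _)) (refine_fiber_sides LS SU UT).1.
apply: eq_bigr => A /andP[LA AU].
rewrite (reindex_onto (fun B => A :|: B) (fun S => S :\: supsets X)) => [|S /andP[_ /eqP <-]];
  last exact: setID.
apply: eq_bigl => B; apply/idP/idP.
  case/andP=> /andP[/andP[LAB ABU] _] /eqP <-.
  by rewrite (inL_subset LAB) ?subsetDl // (refine_fiber_sides LAB ABU UT).2.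
case/andP=> LB BU; have [-> ->] := fiber_setU_sides UT LB AU BU.
rewrite !eqxx !andbT inL_setU_sides //.
- apply: refine_setU; first exact: refine_trans AU (refine_subsetr (fiber_subset U X)).
  exact: refine_trans BU (refine_subsetr (subsetDl U _)).
- exact: refine_trans AU (refine_fiber_set1 U X).
- exact: refine_trans BU (refine_setD_fiber UT).
Qed.

Lemma setD_supsets : T :\: supsets X = T :\ X.
Proof.
apply/setP => Y; rewrite !inE; case YT: (Y \in T); rewrite ?andbF // !andbT.
apply/idP/idP => [| YX]; first by apply: contraNneq => ->.
apply: contra YX => XY; apply/eqP/esym.
exact: inL_below_uniq LT XT YT XY (subxx Y) (inL_card LT YT).
Qed.

Lemma mu_split : mu d T = mu d [set X] * mu d (T :\ X).
Proof.
pose f S := mu d (fiber S X) * mu d (S :\: supsets X).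
have <- : f T = mu d [set X] * mu d (T :\ X) by rewrite /f (fiber_self LT XT) setD_supsets.
apply/esym/(mu_unique dn) => // [|U LU U0 UT].
  by rewrite /f /fiber set0I set0D mu_set0 // mulr1.
rewrite sum_refine_sides //.
under eq_bigr => A /andP[LA AU].
  under eq_bigr => B /andP[LB BU] do
    rewrite /f (fiber_setU_sides UT LB AU BU).1 (fiber_setU_sides UT LB AU BU).2.
  rewrite -mulr_sumr.
  over.
rewrite -mulr_suml.
have [U20 | U20] := eqVneq (U :\: supsets X) set0.
  rewrite sum_mu_refine ?mul0r //; first exact: inL_fiber.
  by apply: contraNneq U0 => U10; rewrite -(setID U (supsets X)) -/(fiber U X) U10 U20 setU0.
by rewrite (sum_mu_refine dn (inL_subset LU (subsetDl U _)) U20) mulr0.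
Qed.

End Split.

Lemma mu_prod n d (T : {set {set 'I_n}}) : (d < n)%N -> inL d T ->
  mu d T = \prod_(X in T) mu d [set X].
Proof.
move=> dn; have [m] := ubnP #|T|; elim: m T => // m IH T cardT LT.
have [-> | [X XT]] := set_0Vmem T; first by rewrite big_set0 mu_set0.
rewrite (big_setD1 X XT) (mu_split dn LT XT) (IH (T :\ X)) //.
  by move: cardT; rewrite (cardsD1 X T) XT.
exact: inL_subset LT (subD1set T X).
Qed.

Section Relabel.
Variables (n d : nat) (X : {set 'I_n}).
Local Notation n' := (n - #|X|)%N.
Local Notation d' := (d - #|X|)%N.
Local Notation fam := {set {set 'I_n}}.
Local Notation fam' := {set {set 'I_n'}}.
Implicit Types (U V : {set 'I_n'}) (S : fam') (R : fam) (Y : {set 'I_n}).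

Lemma card_setC : #|~: X| = n'.
Proof. by rewrite cardsCs card_ord setCK. Qed.

Definition emb (i : 'I_n') : 'I_n := enum_val (cast_ord (esym card_setC) i).

Lemma emb_inj : injective emb.
Proof. by move=> i j /enum_val_inj /cast_ord_inj. Qed.

Lemma emb_notin i : emb i \notin X.
Proof. by have := enum_valP (cast_ord (esym card_setC) i); rewrite inE. Qed.

Lemma emb_onto y : y \notin X -> exists i, emb i = y.
Proof.
move=> yX; have yC : y \in ~: X by rewrite inE.
by exists (cast_ord card_setC (enum_rank_in yC y)); rewrite /emb cast_ordK enum_rankK_in.
Qed.

Definition extend U : {set 'I_n} := X :|: emb @: U.

Lemma mem_extend_emb i U : (emb i \in extend U) = (i \in U).
Proof. by rewrite inE (negbTE (emb_notin i)) (mem_imset _ _ emb_inj). Qed.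

Lemma extend_inj : injective extend.
Proof. by move=> U V eUV; apply/setP => i; rewrite -!mem_extend_emb eUV. Qed.

Lemma extend_subset U V : (extend U \subset extend V) = (U \subset V).
Proof.
apply/idP/idP => [sub | UV]; last by rewrite setUS // imsetS.
by apply/subsetP => i; rewrite -!mem_extend_emb => /(subsetP sub).
Qed.

Lemma card_extend U : #|extend U| = (#|X| + #|U|)%N.
Proof.
rewrite cardsU (card_imset _ emb_inj) -[RHS]subn0; congr (_ - _)%N.
apply/eqP; rewrite cards_eq0 -subset0; apply/subsetP => x; rewrite !inE.
by case/andP=> xX /imsetP[i _ xi]; move: xX; rewrite xi (negbTE (emb_notin i)).
Qed.

Lemma extend_preimage Y : X \subset Y -> extend [set i | emb i \in Y] = Y.
Proof.
move=> XY; apply/setP => x; have [xX | xX] := boolP (x \in X).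
  by rewrite inE xX (subsetP XY).
by have [i <-] := emb_onto xX; rewrite mem_extend_emb inE.
Qed.

Lemma bigcap_extend S : \bigcap_(Y in extend @: S) Y = extend (\bigcap_(U in S) U).
Proof.
rewrite big_imset /=; last by move=> U V _ _; apply: extend_inj.
apply/setP => x; have [xX | xX] := boolP (x \in X).
  by rewrite inE xX; apply/bigcapP => U _; rewrite inE xX.
have [i <-] := emb_onto xX; rewrite mem_extend_emb.
by apply/bigcapP/bigcapP => H U US;
  [rewrite -mem_extend_emb | rewrite mem_extend_emb]; apply: H.
Qed.

Lemma extend_imsetK R : (forall Y, Y \in R -> X \subset Y) -> extend @: (extend @^-1: R) = R.
Proof.
move=> RX; apply/setP => Y; apply/imsetP/idP => [[U] | YR]; first by rewrite inE => ? ->.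
by exists [set i | emb i \in Y]; rewrite ?inE extend_preimage ?RX.
Qed.

Lemma preimset_extendK S : extend @^-1: (extend @: S) = S.
Proof. by apply/setP => U; rewrite inE (mem_imset _ _ extend_inj). Qed.

Lemma imset_extend_subset S1 S2 : (extend @: S1 \subset extend @: S2) = (S1 \subset S2).
Proof. by rewrite sub_imset_pre preimset_extendK. Qed.

Lemma refine_extend S1 S2 : refine (extend @: S1) (extend @: S2) = refine S1 S2.
Proof.
apply/refineP/refineP => H.
  move=> U US1; have [_ /imsetP[V VS2 ->]] := H _ (imset_f extend US1).
  by rewrite extend_subset; exists V.
move=> _ /imsetP[U US1 ->]; have [V VS2 VU] := H U US1.
by exists (extend V); rewrite ?imset_f ?extend_subset.
Qed.

Section SmallX.
Hypothesis Xd : (#|X| <= d)%N.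

Lemma codim_extend U : codim d (extend U) = codim d' U.
Proof. by rewrite /codim card_extend !intS PoszD -(subzn Xd); ring. Qed.

Lemma Dd_extend S : Dd d (extend @: S) = Dd d' S.
Proof.
rewrite /Dd bigcap_extend codim_extend /rho big_imset /=; last first.
  by move=> U V _ _; apply: extend_inj.
by congr (_ - _); apply: eq_bigr => U _; apply: codim_extend.
Qed.

Lemma inL_extend S : inL d (extend @: S) = inL d' S.
Proof.
apply/idP/idP => L.
  apply: inLP => [S' sub | U US]; last first.
    by rewrite leq_subRL // -card_extend (inL_card L) ?imset_f.
  rewrite -Dd_extend -(card_imset _ extend_inj).
  by apply: (inL_Dd L); rewrite imset_extend_subset.
apply: inLP => [R sub | _ /imsetP[U US ->]]; last first.
  by rewrite card_extend -leq_subRL // (inL_card L).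
have RX Y : Y \in R -> X \subset Y by move=> /(subsetP sub) /imsetP[U _ ->]; apply: subsetUl.
rewrite -(extend_imsetK RX) Dd_extend card_imset => [cardR|]; last exact: extend_inj.
by apply: (inL_Dd L) cardR; rewrite -imset_extend_subset extend_imsetK.
Qed.

Hypothesis dn : (d < n)%N.

Lemma mu_extend S : inL d' S -> mu d' S = mu d (extend @: S).
Proof.
have dn' : (d' < n')%N by rewrite ltn_sub2r // (leq_ltn_trans Xd).
move=> LS; symmetry.
apply: (mu_unique dn' (f := fun S => mu d (extend @: S)) LS) => [|U LU U0 _].
  by rewrite imset0 mu_set0.
have LU' : inL d (extend @: U) by rewrite inL_extend.
have U0' : extend @: U != set0 by rewrite -card_gt0 card_imset ?card_gt0 //; apply: extend_inj.
rewrite -[RHS](sum_mu_refine dn LU' U0').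
rewrite (reindex_onto (fun S => extend @: S) (fun R => extend @^-1: R)) => [|R /andP[_ RU]].
  by apply: eq_bigl => S'; rewrite inL_extend refine_extend preimset_extendK eqxx andbT.
apply: extend_imsetK => Y /(refineP _ _ RU)[_ /imsetP[V _ ->]].
by apply: subset_trans; apply: subsetUl.
Qed.

Lemma mu_top : mu d' [set set0 : {set 'I_n'}] = mu d [set X].
Proof. by rewrite mu_extend ?inL_top // imset_set1 /extend imset0 setU0. Qed.

End SmallX.
End Relabel.

Theorem proposition4p1 (n d : nat) (T : {set {set 'I_n}}) :
  (d < n)%N -> inL d T -> T != set0 ->
  mu d T = \prod_(X in T) mu (n := (n - #|X|)%N) (d - #|X|)%N [set set0].
Proof.
move=> dn LT _; rewrite (mu_prod dn LT); apply: eq_bigr => X XT.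
by rewrite mu_top // (inL_card LT XT).
Qed.
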